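(* For all positive integers $n$ and $k$, the outcome class of $G_{n,2nk}$ is $H$.
   Context: Domineering is a two-player game played on a rectangular grid of unit squares. The players alternate placing dominoes, each covering two adjacent unoccupied squares; the player Vertical must place dominoes vertically (covering two squares in the same column), and the player Horizontal must place them horizontally (covering two squares in the same row). A player with no legal move on her turn loses. $G_{m,n}$ denotes the empty board with vertical dimension $m$ (number of rows) and horizontal dimension $n$ (number of columns). Every position has one of four outcome classes under optimal play: $V$ (Vertical wins whoever moves first), $H$ (Horizontal wins whoever moves first), $1$ (the player who moves first wins), $2$ (the player who moves second wins). *)

(* Domineering on an m x n board (m rows, n columns). *)
From mathcomp Require Import all_boot.
Set Implicit Arguments. Unset Strict Implicit. Unset Printing Implicit Defensive.

Inductive player := Vertical | Horizontal.

Definition opponent (p : player) : player :=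
  match p with Vertical => Horizontal | Horizontal => Vertical end.

(* Cells are (row, column) pairs. A position is the set of UNOCCUPIED cells. *)
Definition cell (m n : nat) := ('I_m * 'I_n)%type.

Definition domino (m n : nat) (p : player) (c d : cell m n) : bool :=
  match p with
  | Vertical => (c.2 == d.2) && (val d.1 == (val c.1).+1)
  | Horizontal => (c.1 == d.1) && (val d.2 == (val c.2).+1)
  end.

Definition move (m n : nat) (p : player) (F F' : {set cell m n}) : Prop :=
  exists c d : cell m n,
    [&& c \in F, d \in F & domino p c d] /\ F' = F :\ c :\ d.

Inductive wins (m n : nat) : player -> {set cell m n} -> Prop :=
| wins_intro p F F' : move p F F' -> loses (opponent p) F' -> wins p F
with loses (m n : nat) : player -> {set cell m n} -> Prop :=
| loses_intro p F :
    (forall F', move p F F' -> wins (opponent p) F') -> loses p F.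

Inductive outcome := OutV | OutH | Out1 | Out2.

Definition has_outcome (m n : nat) (F : {set cell m n}) (o : outcome) : Prop :=
  match o with
  | OutV => wins Vertical F /\ loses Horizontal F
  | OutH => wins Horizontal F /\ loses Vertical F
  | Out1 => wins Vertical F /\ wins Horizontal F
  | Out2 => loses Vertical F /\ loses Horizontal F
  end.

Definition G (m n : nat) : {set cell m n} := [set: cell m n].

(* Cut the n x 2nk board into k blocks of n x 2n, each the union of two
   n x n squares, and let [mirror_cell] swap the two squares of every block by
   a reflection that turns columns into rows. It is an involution sending each
   vertical domino to a horizontal domino in the other square, hence disjoint
   from it. On a position invariant under it, Horizontal answers every vertical
   move with its image, which restores invariance, so Vertical runs out of
   moves first. Moving first, Horizontal plays the horizontal domino
   {x, mirror_cell x} straddling the middle of the first block and then keeps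
   mirroring. *)

From mathcomp Require Import all_boot.
From mathcomp Require Import zify.

Set Implicit Arguments. Unset Strict Implicit. Unset Printing Implicit Defensive.

Lemma opponentK : involutive opponent.
Proof. by case. Qed.

Lemma setD1C (T : finType) (A : {set T}) (x y : T) : A :\ x :\ y = A :\ y :\ x.
Proof. by apply/setP => z; rewrite !in_setD1; case: (z == x); case: (z == y). Qed.

Lemma move_setD2 m n p (F : {set cell m n}) c d :
  c \in F -> d \in F -> domino p c d || domino p d c -> move p F (F :\ c :\ d).
Proof.
move=> cF dF /orP [cd | dc]; first by exists c, d; rewrite cF dF cd.
by exists d, c; rewrite cF dF dc setD1C.
Qed.

Section MirrorStrategy.

Variables (m n : nat) (p : player) (f : cell m n -> cell m n).
Hypothesis fK : involutive f.
Hypothesis f_domino : forall c d, domino p c d ->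
  [/\ f c != c, f c != d, f d != c, f d != d &
     domino (opponent p) (f c) (f d) || domino (opponent p) (f d) (f c)].

Lemma mirror_setD1 (F : {set cell m n}) x :
  {mono f : y / y \in F} -> {mono f : y / y \in F :\ x :\ f x}.
Proof.
move=> fF y; have fyx : (f y == x) = (y == f x) by rewrite -{1}[x]fK (can_eq fK).
by rewrite !in_setD1 fF (can_eq fK) fyx; case: (y == x); case: (y == f x).
Qed.

Lemma loses_mirror (F : {set cell m n}) : {mono f : y / y \in F} -> loses p F.
Proof.
have [N] := ubnP #|F|; elim: N F => // N IH F ltFN fF.
constructor => F' [c [d [/and3P [cF dF cd] ->]]].
have [fcc fcd fdc fdd fdom] := f_domino cd.
pose R := F :\ c :\ f c :\ d :\ f d.
have fR : {mono f : y / y \in R} by do 2!apply: mirror_setD1.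
have ltRN : #|R| < N.
  apply: leq_trans (_ : #|R| < #|F|) ltFN; apply/proper_card/properP; split.
    by apply/subsetP => y; rewrite !in_setD1 => /and5P [].
  by exists c; rewrite // !in_setD1 eqxx !andbF.
apply: (wins_intro (F' := R)); last by rewrite opponentK; exact: IH ltRN fR.
have -> : R = F :\ c :\ d :\ f c :\ f d by rewrite /R (setD1C _ (f c)) (setD1C _ (f c)).
by apply: move_setD2 fdom; rewrite !in_setD1 ?fcc ?fcd ?fdc ?fdd fF.
Qed.

Lemma wins_mirror (F : {set cell m n}) x :
  {mono f : y / y \in F} -> x \in F -> domino (opponent p) x (f x) ->
  wins (opponent p) F.
Proof.
move=> fF xF xfx; apply: (wins_intro (F' := F :\ x :\ f x)).
  by apply: move_setD2; rewrite ?xfx ?fF.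
by rewrite opponentK; apply/loses_mirror/mirror_setD1.
Qed.

End MirrorStrategy.

Definition mirror_block (n r c : nat) : nat * nat :=
  if c < n then (c, (2 * n).-1 - r) else ((2 * n).-1 - c, r).

Definition mirror (n r c : nat) : nat * nat :=
  let q := mirror_block n r (c %% (2 * n)) in (q.1, 2 * n * (c %/ (2 * n)) + q.2).

Section MirrorBlock.

Variables (n r c : nat).
Hypotheses (ltrn : r < n) (ltc2n : c < 2 * n).

Lemma mirror_block_lt :
  (mirror_block n r c).1 < n /\ (mirror_block n r c).2 < 2 * n.
Proof. by rewrite /mirror_block; case: ifP => /=; lia. Qed.

Lemma mirror_blockK :
  mirror_block n (mirror_block n r c).1 (mirror_block n r c).2 = (r, c).
Proof.
rewrite /mirror_block; case: (ltnP c n) => hc /=.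
  have -> : ((2 * n).-1 - r < n) = false by lia.
  by congr pair; lia.
by rewrite ltrn; congr pair; lia.
Qed.

Lemma mirror_block_adj : r.+1 < n ->
  (mirror_block n r c).1 = (mirror_block n r.+1 c).1 /\
  ((mirror_block n r c).2 = (mirror_block n r.+1 c).2.+1 \/
   (mirror_block n r.+1 c).2 = (mirror_block n r c).2.+1).
Proof. by rewrite /mirror_block; case: ifP => /= _ ltr1n; split => //; lia. Qed.

End MirrorBlock.

Lemma mirror_block_col_neq n r c : r < n -> (mirror_block n r c).2 != c.
Proof. by rewrite /mirror_block; case: ifP => /=; lia. Qed.

Lemma mirrorE n r b c : c < 2 * n ->
  mirror n r (2 * n * b + c) = ((mirror_block n r c).1, 2 * n * b + (mirror_block n r c).2).
Proof.
move=> ltc2n; have n2_gt0 : 0 < 2 * n by lia.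
rewrite /mirror mulnC divnMDl // divn_small // addn0 modnMDl modn_small //.
by rewrite [b * _]mulnC.
Qed.

Section Mirror.

Variables (n r c : nat).
Hypothesis ltrn : r < n.

Let ltc2n : c %% (2 * n) < 2 * n.
Proof. by rewrite ltn_mod; lia. Qed.

Lemma mirror_lt k : c < 2 * n * k ->
  (mirror n r c).1 < n /\ (mirror n r c).2 < 2 * n * k.
Proof.
move=> ltc.
have [lt1 lt2] := mirror_block_lt ltrn ltc2n.
have ltq : c %/ (2 * n) < k by rewrite ltn_divLR; lia.
by split => //=; nia.
Qed.

Lemma mirrorK : mirror n (mirror n r c).1 (mirror n r c).2 = (r, c).
Proof.
have [lt1 lt2] := mirror_block_lt ltrn ltc2n.
rewrite /= mirrorE // mirror_blockK //=.
by rewrite {3}(divn_eq c (2 * n)) mulnC.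
Qed.

Lemma mirror_col_neq : (mirror n r c).2 != c.
Proof.
rewrite /mirror /= [X in _ != X](divn_eq c (2 * n)) (mulnC (c %/ _)) eqn_add2l.
exact: mirror_block_col_neq.
Qed.

Lemma mirror_adj : r.+1 < n ->
  (mirror n r c).1 = (mirror n r.+1 c).1 /\
  ((mirror n r c).2 = (mirror n r.+1 c).2.+1 \/
   (mirror n r.+1 c).2 = (mirror n r c).2.+1).
Proof.
move=> ltr1n; have [e1 e2] := mirror_block_adj ltrn ltc2n ltr1n.
rewrite /mirror /= e1; split => //.
by case: e2 => ->; [left | right]; rewrite addnS.
Qed.

End Mirror.

Lemma mirror_centre n : 0 < n -> mirror n n.-1 n.-1 = (n.-1, n).
Proof.
move=> n_gt0; have ltn12n : n.-1 < 2 * n by lia.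
rewrite /mirror /mirror_block divn_small // modn_small // ltn_predL n_gt0 /=.
by congr pair; lia.
Qed.

Section MirrorCell.

Variables n k : nat.

Definition mirror_cell (x : cell n (2 * n * k)) : cell n (2 * n * k) :=
  (insubd x.1 (mirror n x.1 x.2).1, insubd x.2 (mirror n x.1 x.2).2).

Lemma mirror_cell_val x :
  val (mirror_cell x).1 = (mirror n x.1 x.2).1 /\
  val (mirror_cell x).2 = (mirror n x.1 x.2).2.
Proof. by have [lt1 lt2] := mirror_lt (ltn_ord x.1) (ltn_ord x.2); rewrite !val_insubd lt1 lt2. Qed.

Lemma mirror_cellK : involutive mirror_cell.
Proof.
move=> x; have [v1 v2] := mirror_cell_val x.
have [w1 w2] := mirror_cell_val (mirror_cell x).
have := mirrorK x.2 (ltn_ord x.1); rewrite -v1 -v2 => mirrorK_x.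
rewrite [mirror_cell (mirror_cell x)]surjective_pairing [x in _ = x]surjective_pairing.
by congr pair; apply: val_inj; rewrite ?w1 ?w2 mirrorK_x.
Qed.

Lemma mirror_cell_neq x y : x.2 = y.2 -> mirror_cell x != y.
Proof.
move=> exy; apply: (contraNneq _ (mirror_col_neq x.2 (ltn_ord x.1))).
by have [_ <-] := mirror_cell_val x; move=> ->; rewrite exy.
Qed.

Lemma mirror_cell_domino c d : domino Vertical c d ->
  [/\ mirror_cell c != c, mirror_cell c != d, mirror_cell d != c,
      mirror_cell d != d &
      domino Horizontal (mirror_cell c) (mirror_cell d) ||
      domino Horizontal (mirror_cell d) (mirror_cell c)].
Proof.
case/andP => /eqP ecol /eqP erow.
split; try by apply: mirror_cell_neq.
have ltr1n : (val c.1).+1 < n by rewrite -erow; exact: ltn_ord.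
have [v1 v2] := mirror_cell_val c; have [w1 w2] := mirror_cell_val d.
rewrite erow -ecol in w1 w2.
have [e1 e2] := mirror_adj c.2 (ltn_ord c.1) ltr1n.
rewrite -v1 -v2 -w1 -w2 in e1 e2.
rewrite /domino (val_inj e1) eqxx /=.
by case: e2 => ->; rewrite eqxx ?orbT.
Qed.

End MirrorCell.

Theorem proposition3p1 (n k : nat) (hn : 0 < n) (hk : 0 < k) :
  has_outcome (G n (2 * n * k)) OutH.
Proof.
have G_mirror : {mono @mirror_cell n k : x / x \in G n (2 * n * k)}.
  by move=> x; rewrite !inE.
split; last exact: loses_mirror (@mirror_cellK n k) (@mirror_cell_domino n k) _ G_mirror.
have ltn1n : n.-1 < n by lia.
have ltn1 : n.-1 < 2 * n * k by nia.
pose x0 : cell n (2 * n * k) := (Ordinal ltn1n, Ordinal ltn1).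
apply: (wins_mirror (@mirror_cellK n k) (@mirror_cell_domino n k) G_mirror (x := x0)).
  by rewrite inE.
have [v1 v2] := mirror_cell_val x0.
rewrite [mirror _ _ _](mirror_centre hn) in v1 v2.
apply/andP; split; first by rewrite -val_eqE v1.
by rewrite v2 /=; lia.
Qed.
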